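(* Let $\mathcal{P}=(\mathrm{Var},C)$ be a non-overlapping program and let $\varphi=\mathbb{P}_{\bowtie\lambda}(\lozenge G)$ with $\bowtie\in\{<,\leq\}$ be a safety reachability property such that $\mathcal{P}\not\models\varphi$. Then a set $E\subseteq C$ of commands is a high-level counterexample for $\mathcal{P}$ and $\varphi$ if and only if it is a program-level counterexample for $\mathcal{P}$ and $\{\varphi\}$.
   Context: Programs: a program $\mathcal{P}=(\mathrm{Var},C)$ consists of a finite set $\mathrm{Var}$ of variables, each with a finite integer range and an initial value, and a finite set $C$ of guarded commands of the form $g\to p_1:u_1+\dots+p_n:u_n$, where the guard $g$ is a Boolean expression over $\mathrm{Var}$, the $p_i$ are expressions over $\mathrm{Var}$ that evaluate to a probability distribution in every state satisfying $g$, and each update $u_i$ assigns expressions over $\mathrm{Var}$ to variables. A state is a valuation of $\mathrm{Var}$. A program is non-overlapping if no state satisfies the guards of two distinct commands. The underlying MC $[\![\mathcal{P}]\!]$ has the valuations as states, the initial valuation as initial state, and from a state $s$ in which command $g\to\sum_i p_i:u_i$ is enabled it moves to $u_i(s)$ with probability $p_i(s)$. $\mathsf{fixdl}(\mathcal{P})$ is $\mathcal{P}$ extended with a command that is enabled exactly in states where no guard holds and produces a self-loop. For $E\subseteq C$, $\mathcal{P}_{|E}=(\mathrm{Var},E)$. For $G$ a set of states (given by a predicate), $\mathcal{P}\models\mathbb{P}_{\bowtie\lambda}(\lozenge G)$ iff in $[\![\mathsf{fixdl}(\mathcal{P})]\!]$ the probability of reaching $G$ from the initial state is $\bowtie\lambda$.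 A high-level counterexample for $\mathcal{P}$ and $\varphi$ (with $\mathcal{P}\not\models\varphi$) is a set $E\subseteq C$ with $\mathsf{fixdl}(\mathcal{P}_{|E})\not\models\varphi$. A program-level counterexample for $\mathcal{P}$ and a specification $\Phi$ (with $\mathcal{P}\not\models\Phi$) is a set $E\subseteq C$ such that for every non-overlapping program $\mathcal{P}'=(\mathrm{Var},E'')$ with $E''\supseteq E$ we have $\mathsf{fixdl}(\mathcal{P}')\not\models\Phi$. *)

From HB Require Import structures.
From mathcomp Require Import all_boot all_order all_algebra.
From mathcomp Require Import boolp classical_sets reals.
From Stdlib Require List.
Set Implicit Arguments. Unset Strict Implicit. Unset Printing Implicit Defensive.
Import Order.TTheory GRing.Theory Num.Theory.
Local Open Scope ring_scope.

Record vars := Vars {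
  var_t : finType;
  lo : var_t -> int;
  hi : var_t -> int;
  init : var_t -> int;
  init_range : forall v, lo v <= init v <= hi v }.

Definition state (X : vars) :=
  {f : var_t X -> int | forall v, lo v <= f v <= hi v}.

Definition init_state (X : vars) : state X := exist _ (@init X) (@init_range X).

Section Programs.
Variables (R : realType) (X : vars).

(* A guarded command g -> p_1:u_1 + ... + p_n:u_n, with expressions given
   semantically as functions of the state. *)
Record command := Command {
  guard : state X -> bool;
  updates : seq ((state X -> R) * (state X -> state X)) }.

Definition wf_command (c : command) : Prop :=
  forall s, guard c s ->
    (forall pu, List.In pu (updates c) -> 0 <= pu.1 s) /\
    \sum_(pu <- updates c) pu.1 s = 1.

Definition program := seq command.

Definition wf_program (C : program) : Prop := forall c, List.In c C -> wf_command c.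

Definition nonoverlapping (C : program) : Prop :=
  forall c1 c2 s, List.In c1 C -> List.In c2 C -> guard c1 s -> guard c2 s -> c1 = c2.

Definition subcmds (E C : program) : Prop := forall c, List.In c E -> List.In c C.

Definition deadlock_cmd (C : program) : command :=
  Command (fun s => ~~ has (fun c => guard c s) C) [:: (fun _ => 1, id)].

Definition fixdl (C : program) : program := rcons C (deadlock_cmd C).

(* Transition distribution of the underlying MC [[P]] at s (for non-overlapping
   programs the enabled command, if any, is unique): list of (prob, successor). *)
Definition mc_step (C : program) (s : state X) : seq (R * state X) :=
  match [seq c <- C | guard c s] with
  | c :: _ => [seq (pu.1 s, pu.2 s) | pu <- updates c]
  | [::] => [::]
  end.

Fixpoint reach_n (C : program) (G : state X -> bool) (n : nat) (s : state X) : R :=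
  if G s then 1 else
  match n with
  | 0 => 0
  | n'.+1 => \sum_(ps <- mc_step C s) ps.1 * reach_n C G n' ps.2
  end.

(* probability of eventually reaching G from the initial state in [[C]]:
   supremum (= limit) of the bounded reachability probabilities *)
Definition reach_prob (C : program) (G : state X -> bool) : R :=
  sup [set reach_n C G n (init_state X) | n in [set: nat]].

Inductive cmp := CLt | CLe.
Definition cmp_rel (b : cmp) (x y : R) : bool :=
  match b with CLt => x < y | CLe => x <= y end.

Record prop := Prop_ { p_cmp : cmp; p_lam : R; p_goal : state X -> bool }.

Definition models (C : program) (phi : prop) : Prop :=
  cmp_rel (p_cmp phi) (reach_prob (fixdl C) (p_goal phi)) (p_lam phi).

Definition models_spec (C : program) (Phi : seq prop) : Prop :=
  forall phi, List.In phi Phi -> models C phi.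

Definition high_level_cex (C : program) (phi : prop) (E : program) : Prop :=
  subcmds E C /\ ~ models (fixdl E) phi.

Definition program_level_cex (C : program) (Phi : seq prop) (E : program) : Prop :=
  subcmds E C /\
  forall E'' : program, wf_program E'' -> nonoverlapping E'' -> subcmds E E'' ->
    ~ models_spec (fixdl E'') Phi.

End Programs.

(* Executing a command of E in fixdl(E) is the same as in fixdl(E'') for any
   non-overlapping E'' containing E, while a deadlock of E outside G contributes
   probability 0 to reaching G.  Hence the reachability probabilities of fixdl(E)
   are bounded by those of fixdl(E''), and an upper-bound property violated by E
   stays violated by every such E''; the converse direction takes E'' = E. *)
From mathcomp Require Import all_boot all_order all_algebra.
From mathcomp Require Import boolp classical_sets reals.
From Stdlib Require List.
Set Implicit Arguments. Unset Strict Implicit. Unset Printing Implicit Defensive.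
Import Order.TTheory GRing.Theory Num.Theory.
Local Open Scope ring_scope.

Section SumsOverLists.
Variables (R : realType) (T : Type).

Lemma sumr_ge0_In (l : seq T) (F : T -> R) :
  (forall x, List.In x l -> 0 <= F x) -> 0 <= \sum_(x <- l) F x.
Proof.
elim: l => [|a l IHl] F_ge0; first by rewrite big_nil.
rewrite big_cons addr_ge0 ?F_ge0 ?IHl //; first by left.
by move=> x lx; apply: F_ge0; right.
Qed.

Lemma ler_sum_In (l : seq T) (F G : T -> R) :
  (forall x, List.In x l -> F x <= G x) ->
  \sum_(x <- l) F x <= \sum_(x <- l) G x.
Proof.
elim: l => [|a l IHl] leFG; first by rewrite !big_nil.
rewrite !big_cons lerD ?leFG ?IHl //; first by left.
by move=> x lx; apply: leFG; right.
Qed.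

End SumsOverLists.

Lemma In_filter (T : Type) (p : pred T) (l : seq T) x :
  List.In x [seq y <- l | p y] <-> List.In x l /\ p x.
Proof. exact: List.filter_In. Qed.

Section Reachability.
Variables (R : realType) (X : vars).
Implicit Types (C D : program R X) (G : state X -> bool) (s : state X).

Lemma wf_program_sub C D : subcmds D C -> wf_program C -> wf_program D.
Proof. by move=> sDC wfC c /sDC; apply: wfC. Qed.

Lemma nonoverlapping_sub C D : subcmds D C -> nonoverlapping C -> nonoverlapping D.
Proof. by move=> sDC noC c1 c2 s /sDC c1C /sDC c2C; apply: noC. Qed.

Lemma wf_fixdl D : wf_program D -> wf_program (fixdl D).
Proof.
move=> wfD c; rewrite /fixdl -cats1 => /(List.in_app_or D)[/wfD //|[<-|//]] s _.
by split=> [pu [<-|//]|]; rewrite ?big_seq1.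
Qed.

Lemma first_enabled_In D s c l :
  [seq c <- D | guard c s] = c :: l -> List.In c D /\ guard c s.
Proof. by move=> enD; apply/(In_filter (fun c => guard c s)); rewrite enD; left. Qed.

Lemma mc_step_fixdl D s :
  mc_step (fixdl D) s =
  if [seq c <- D | guard c s] is c :: _ then [seq (pu.1 s, pu.2 s) | pu <- updates c]
  else [:: (1, s)].
Proof.
rewrite /mc_step /fixdl -cats1 filter_cat.
case enD: [seq c <- D | guard c s] => [|c l] //=.
by rewrite -size_filter_gt0 enD.
Qed.

Lemma mc_step_fixdl_fixdl D s : mc_step (fixdl (fixdl D)) s = mc_step (fixdl D) s.
Proof.
rewrite [LHS]mc_step_fixdl [RHS]mc_step_fixdl /fixdl -cats1 filter_cat.
case enD: [seq c <- D | guard c s] => [|c l] //=.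
by rewrite -size_filter_gt0 enD.
Qed.

Lemma eq_reach_n C C' G :
  (forall s, mc_step C s = mc_step C' s) -> reach_n C G =2 reach_n C' G.
Proof.
move=> eq_step n; elim: n => [//|n IHn] s /=.
by rewrite eq_step; under eq_bigr do rewrite IHn.
Qed.

Lemma reach_n_bounds C G n s : wf_program C -> 0 <= reach_n C G n s <= 1.
Proof.
move=> wfC; elim: n s => [|n IHn] s /=; case: (G s); rewrite ?ler01 ?lexx //.
rewrite /mc_step.
case enC: [seq c <- C | guard c s] => [|c l]; first by rewrite big_nil lexx ler01.
have [/wfC wf_c guard_c] := first_enabled_In enC.
have [p_ge0 sum_p] := wf_c s guard_c.
rewrite big_map; apply/andP; split.
  by apply: sumr_ge0_In => pu /p_ge0 ?; rewrite mulr_ge0 //; case/andP: (IHn (pu.2 s)).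
rewrite -sum_p; apply: ler_sum_In => pu /p_ge0 ?.
by rewrite ler_piMr //; case/andP: (IHn (pu.2 s)).
Qed.

Lemma reach_n_fixdl_deadlock D G n s :
  [seq c <- D | guard c s] = [::] -> ~~ G s -> reach_n (fixdl D) G n s = 0.
Proof.
move=> enD nGs; elim: n => [|n IHn] /=; rewrite (negbTE nGs) //.
by rewrite mc_step_fixdl enD big_seq1 mul1r.
Qed.

Lemma first_enabled_sub D D' s c l :
  nonoverlapping D' -> subcmds D D' -> [seq c <- D | guard c s] = c :: l ->
  exists l', [seq c <- D' | guard c s] = c :: l'.
Proof.
move=> noD' sDD' enD; have [/sDD' cD' guard_c] := first_enabled_In enD.
case enD': [seq c <- D' | guard c s] => [|c' l'].
  by have /(In_filter (fun c => guard c s)) := conj cD' guard_c; rewrite enD'.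
have [c'D' guard_c'] := first_enabled_In enD'.
by exists l'; rewrite (noD' c c' s).
Qed.

Lemma reach_n_fixdl_sub D D' G n s :
  wf_program D -> wf_program D' -> nonoverlapping D' -> subcmds D D' ->
  reach_n (fixdl D) G n s <= reach_n (fixdl D') G n s.
Proof.
move=> wfD wfD' noD' sDD'; elim: n s => [|n IHn] s; first by rewrite /=; case: (G s).
case Gs: (G s); first by rewrite /= Gs.
case enD: [seq c <- D | guard c s] => [|c l].
  rewrite reach_n_fixdl_deadlock ?Gs //.
  by case/andP: (reach_n_bounds G n.+1 s (wf_fixdl wfD')).
have [l' enD'] := first_enabled_sub noD' sDD' enD.
have [/wfD wf_c guard_c] := first_enabled_In enD.
rewrite /= Gs !mc_step_fixdl enD enD' !big_map.
apply: ler_sum_In => pu pu_c; rewrite ler_wpM2l //.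
exact: (proj1 (wf_c s guard_c)).
Qed.

Lemma le_reach_prob C C' G :
  wf_program C' ->
  (forall n, reach_n C G n (init_state X) <= reach_n C' G n (init_state X)) ->
  reach_prob C G <= reach_prob C' G.
Proof.
move=> wfC' le_reach; apply: ge_sup; first by exists (reach_n C G 0 (init_state X)), 0%N.
move=> _ [n _ <-]; apply: le_trans (le_reach n) _.
apply: ub_le_sup; last by exists n.
by exists 1 => _ [m _ <-]; case/andP: (reach_n_bounds G m (init_state X) wfC').
Qed.

Lemma cmp_rel_le_trans b (x y lam : R) : x <= y -> cmp_rel b y lam -> cmp_rel b x lam.
Proof. by case: b => /=; [apply: le_lt_trans | apply: le_trans]. Qed.

(* [models] already closes deadlocks, so [high_level_cex] speaks about
   fixdl (fixdl E); the second closure adds no behaviour. *)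
Lemma models_fixdl D phi : models (fixdl D) phi <-> models D phi.
Proof.
rewrite /models /reach_prob.
by under eq_imagel do rewrite (eq_reach_n _ (mc_step_fixdl_fixdl D)).
Qed.

Lemma models_spec1 C phi : models_spec C [:: phi] <-> models C phi.
Proof. by split=> [m|m _ [<-|[]]] //; apply: m; left. Qed.

Lemma models_sub D D' phi :
  wf_program D -> wf_program D' -> nonoverlapping D' -> subcmds D D' ->
  models D' phi -> models D phi.
Proof.
move=> wfD wfD' noD' sDD'; apply: cmp_rel_le_trans.
apply: le_reach_prob; first exact: wf_fixdl.
by move=> n; apply: reach_n_fixdl_sub.
Qed.

End Reachability.

Theorem proposition3 (R : realType) (X : vars) (C : program R X)
  (b : cmp) (lam : R) (G : state X -> bool) :
  wf_program C -> nonoverlapping C ->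
  ~ models C (Prop_ b lam G) ->
  forall E : program R X, subcmds E C ->
    (high_level_cex C (Prop_ b lam G) E <->
     program_level_cex C [:: Prop_ b lam G] E).
Proof.
move=> wfC noC _ E sEC.
have wfE := wf_program_sub sEC wfC.
have noE := nonoverlapping_sub sEC noC.
rewrite /high_level_cex /program_level_cex models_fixdl.
split=> -[_ cexE]; split=> //.
  move=> E'' wfE'' noE'' sEE''; rewrite models_spec1 models_fixdl.
  by move/(models_sub wfE wfE'' noE'' sEE'').
by move=> mE; apply: (cexE E wfE noE) => //; rewrite models_spec1 models_fixdl.
Qed.
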